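(* Let $\mathbf G$ and $\widetilde{\mathbf G}$ be finite oriented metric graphs, where $\widetilde{\mathbf G}$ is obtained from $\mathbf G$ by reversing the orientation of the edges in a subset $\mathcal J_-\subset\mathcal J$ (as described in the context), let $\Lambda$ be a linear relation in their common vertex space $\mathcal F$, let $D^{\Lambda_W}$ be the restriction of $D^{max}$ to $\{\Phi\in\widetilde H^1(\mathbf G;\mathbb C^2):(W\Gamma^1\Phi,W\Gamma^2\Phi)\in\Lambda\}$ and $\widetilde D^{\Lambda_{\widetilde W}}$ the restriction of $\widetilde D^{max}$ to $\{\widetilde\Phi\in\widetilde H^1(\widetilde{\mathbf G};\mathbb C^2):(\widetilde W\widetilde\Gamma^1\widetilde\Phi,\widetilde W\widetilde\Gamma^2\widetilde\Phi)\in\Lambda\}$. Then $$\widetilde D^{\Lambda_{\widetilde W}}P_{\mathcal J_-}=P_{\mathcal J_-}D^{\Lambda_W}.$$ In particular, $\widetilde D^{\Lambda_{\widetilde W}}$ and $D^{\Lambda_W}$ are unitarily equivalent.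
   Context: Let $m\ge0$. A finite oriented metric graph has a finite nonempty vertex set $\mathcal V$, finite sets $\mathcal I$ (internal) and $\mathcal E$ (external) of edges, $\mathcal J=\mathcal I\cup\mathcal E\ne\emptyset$, no loops. Each internal edge $i$ has initial vertex $\partial_-i$ and terminal vertex $\partial_+i$ and is identified with $I_i=(a_i,b_i)$, $a_i\leftrightarrow\partial_-i$, $b_i\leftrightarrow\partial_+i$. An external edge $e$ attached to a vertex is identified with $(a_e,+\infty)$ if the vertex is its initial vertex ($\rho(e)=-1$) or with $(-\infty,b_e)$ if it is its terminal vertex ($\rho(e)=1$); $\partial e$ is the finite endpoint. Data on a graph: $\mathscr H=\bigoplus_jL^2(I_j;\mathbb C^2)$; $\widetilde H^1=\bigoplus_jH^1(I_j;\mathbb C^2)$; $D^{max}$ acts edgewise by $-i\sigma_1\phi_j'+m\sigma_3\phi_j$ ($\sigma_1=\begin{pmatrix}0&1\\1&0\end{pmatrix}$, $\sigma_3=\operatorname{diag}(1,-1)$); $\mathcal G=\bigoplus_j\mathcal G_j$, $\mathcal G_i=\mathbb C^2$, $\mathcal G_e=\mathbb C$; $\Gamma^1_i\Phi=(\phi_i^1(a_i),\phi_i^1(b_i))^T$, $\Gamma^2_i\Phi=(i\phi_i^2(a_i),-i\phi_i^2(b_i))^T$, $\Gamma^1_e\Phi=\phi_e^1(\partial e)$, $\Gamma^2_e\Phi=-i\rho(e)\phi^2_e(\partial e)$, $\Gamma^k=\bigoplus_j\Gamma^k_j$; vertex space $\mathcal F=\bigoplus_v\mathbb C^{\deg v}$;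 coordinates of $\mathcal G$ and $\mathcal F$ are labelled by pairs $(j,v)$, $v$ a vertex endpoint of $j$; in $\mathcal G$ ordered edge by edge in a fixed edge order (for internal edges the pair with the initial vertex first), in $\mathcal F$ vertex by vertex in a fixed vertex order and within a vertex by the fixed edge order; $W:\mathcal G\to\mathcal F$ is the permutation matrix sending coordinate $(j,v)$ of $\mathcal G$ to coordinate $(j,v)$ of $\mathcal F$. The graph $\widetilde{\mathbf G}$ has the same vertices and edges (with the same fixed orders) but for $j\in\mathcal J_-$ the initial and terminal vertices are swapped; an edge $j\in\mathcal J_-$ with interval $(a,b)$ in $\mathbf G$ (where $a$ or $b$ may be infinite) gets the interval $(-b,-a)$ in $\widetilde{\mathbf G}$, while edges in $\mathcal J\setminus\mathcal J_-$ keep their intervals. $\widetilde{\mathscr H},\widetilde D^{max},\widetilde\Gamma^1,\widetilde\Gamma^2,\widetilde W$ are defined by the same rules for $\widetilde{\mathbf G}$ (so $\mathcal F$ and its ordering coincide, but in $\widetilde{\mathcal G}=\mathcal G$ the order of the two pairs belonging to an internal edge in $\mathcal J_-$ is swapped). $P_{\mathcal J_-}:\mathscr H\to\widetilde{\mathscr H}$ is $\bigoplus_jP_{\mathcal J_-,j}$ with $P_{\mathcal J_-,j}$ the identity for $j\notin\mathcal J_-$ and $(P_{\mathcal J_-,j}\phi)(\tilde x)=\sigma_3\phi(-\tilde x)$ for $j\in\mathcal J_-$. *)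

From mathcomp Require Import all_boot all_order all_algebra.
From mathcomp Require Import all_classical all_reals all_analysis.
Import Order.TTheory GRing.Theory Num.Theory.
From mathcomp Require Import complex.
Set Implicit Arguments. Unset Strict Implicit. Unset Printing Implicit Defensive.
Local Open Scope ring_scope.
Local Open Scope classical_set_scope.

(* A finite oriented metric graph.
   internal edge i : identified with (ia i, ib i), initial vertex src i, terminal tgt i.
   external edge e : attached at vertex eatt e, with finite endpoint ept e;
     einit e = true  : eatt e is the initial vertex (rho(e) = -1), interval (ept e, +oo)
     einit e = false : eatt e is the terminal vertex (rho(e) = 1), interval (-oo, ept e). *)
Record mgraph (R : realType) := MGraph {
  vert : finType; iedge : finType; eedge : finType;
  src : iedge -> vert; tgt : iedge -> vert;
  ia : iedge -> R; ib : iedge -> R;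
  eatt : eedge -> vert; einit : eedge -> bool; ept : eedge -> R }.
Arguments vert {R} G : rename. Arguments iedge {R} G : rename. Arguments eedge {R} G : rename.
Arguments src {R} G _ : rename. Arguments tgt {R} G _ : rename. Arguments ia {R} G _ : rename. Arguments ib {R} G _ : rename.
Arguments eatt {R} G _ : rename. Arguments einit {R} G _ : rename. Arguments ept {R} G _ : rename.

Notation edge G := (iedge G + eedge G)%type.

Definition wf (R : realType) (G : mgraph R) : Prop :=
  [/\ (0 < #|{: vert G}|)%N, (forall i, src G i != tgt G i),
      (forall i, ia G i < ib G i) & (0 < #|{: iedge G}| + #|{: eedge G}|)%N].

Definition revG (R : realType) (G : mgraph R) (Jm : {set edge G}) : mgraph R :=
  @MGraph R (vert G) (iedge G) (eedge G)
    (fun i => if inl i \in Jm then tgt G i else src G i)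
    (fun i => if inl i \in Jm then src G i else tgt G i)
    (fun i => if inl i \in Jm then - ib G i else ia G i)
    (fun i => if inl i \in Jm then - ia G i else ib G i)
    (eatt G)
    (fun e => if inr e \in Jm then ~~ einit G e else einit G e)
    (fun e => if inr e \in Jm then - ept G e else ept G e).

Definition Ij (R : realType) (G : mgraph R) (j : edge G) : set R :=
  match j with
  | inl i => [set` `]ia G i, ib G i[]
  | inr e => if einit G e then [set` `]ept G e, +oo[] else [set` `]-oo, ept G e[]
  end.
Definition Kj (R : realType) (G : mgraph R) (j : edge G) : set R :=
  match j with
  | inl i => [set` `[ia G i, ib G i]]
  | inr e => if einit G e then [set` `[ept G e, +oo[] else [set` `]-oo, ept G e]]
  end.

Arguments Ij {R} G j. Arguments Kj {R} G j.

Definition state (R : realType) (G : mgraph R) := edge G -> R -> R[i] * R[i].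

Definition mu (R : realType) := @lebesgue_measure R.
Arguments mu R : clear implicits.

Definition L2r (R : realType) (D : set R) (f : R -> R) : Prop :=
  measurable_fun D f /\ (\int[mu R]_(x in D) ((f x) ^+ 2)%:E < +oo)%E.
Definition L2c (R : realType) (D : set R) (f : R -> R[i]) : Prop :=
  L2r D (fun x => Re (f x)) /\ L2r D (fun x => Im (f x)).
Definition L2 (R : realType) (G : mgraph R) (Phi : state G) : Prop :=
  forall j, L2c (Ij G j) (fun x => (Phi j x).1) /\ L2c (Ij G j) (fun x => (Phi j x).2).

Definition ACr (R : realType) (K : set R) (f g : R -> R) : Prop :=
  forall x y, K x -> K y -> x <= y ->
    (\int[mu R]_(t in [set` `[x, y]]) (g t)%:E = (f y - f x)%:E)%E.
(* f in H^1(I) (represented by its continuous representative on the closure K of I),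
   with (weak) derivative g *)
Definition H1c (R : realType) (I K : set R) (f g : R -> R[i]) : Prop :=
  [/\ L2c I f, L2c I g, ACr K (fun x => Re (f x)) (fun x => Re (g x))
    & ACr K (fun x => Im (f x)) (fun x => Im (g x))].

Definition aeq (R : realType) (T : Type) (D : set R) (f g : R -> T) : Prop :=
  {ae mu R, forall x, D x -> f x = g x}.

(* coordinates of the space cal G: one per end (j,v) of an edge:
   inl (i,false) = (i, initial vertex), inl (i,true) = (i, terminal vertex), inr e = (e, ∂e) *)
Definition ends (R : realType) (G : mgraph R) := (iedge G * bool + eedge G)%type.

Definition rho (R : realType) (G : mgraph R) (e : eedge G) : R[i] :=
  if einit G e then -1 else 1.

Definition Gam1 (R : realType) (G : mgraph R) (Phi : state G) (k : ends G) : R[i] :=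
  match k with
  | inl (i, false) => (Phi (inl i) (ia G i)).1
  | inl (i, true) => (Phi (inl i) (ib G i)).1
  | inr e => (Phi (inr e) (ept G e)).1
  end.
Definition Gam2 (R : realType) (G : mgraph R) (Phi : state G) (k : ends G) : R[i] :=
  match k with
  | inl (i, false) => ('i%C * (Phi (inl i) (ia G i)).2)
  | inl (i, true) => (- 'i%C * (Phi (inl i) (ib G i)).2)
  | inr e => (- 'i%C * rho e * (Phi (inr e) (ept G e)).2)
  end.

(* incidence and the index set of the vertex space F = (+)_v C^{deg v}:
   coordinates labelled by pairs (j,v) with v a vertex endpoint of j *)
Definition inc (R : realType) (G : mgraph R) (j : edge G) (v : vert G) : bool :=
  match j with
  | inl i => (v == src G i) || (v == tgt G i)
  | inr e => v == eatt G e
  end.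
Definition Fidx (R : realType) (G : mgraph R) := {p : edge G * vert G | inc p.1 p.2}.

Definition end_at (R : realType) (G : mgraph R) (j : edge G) (v : vert G) : ends G :=
  match j with
  | inl i => inl (i, v != src G i)
  | inr e => inr e
  end.
(* W : cal G -> F, sending coordinate (j,v) of cal G to coordinate (j,v) of F;
   lab gives the label (j,v) of each coordinate of F *)
Definition Wmap (R : realType) (G : mgraph R) (K : finType) (lab : K -> edge G * vert G)
  (x : ends G -> R[i]) : K -> R[i] := fun k => x (end_at (lab k).1 (lab k).2).

Definition lin_rel (R : realType) (K : Type) (Lam : (K -> R[i]) -> (K -> R[i]) -> Prop) : Prop :=
  Lam (fun _ => 0) (fun _ => 0) /\
  forall (a : R[i]) x y x' y', Lam x y -> Lam x' y' ->
    Lam (fun k => a * x k + x' k) (fun k => a * y k + y' k).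

(* -i sigma_1 phi' + m sigma_3 phi, with u = phi(x), v = phi'(x) *)
Definition Dmax (R : realType) (m : R) (u v : R[i] * R[i]) : R[i] * R[i] :=
  (- 'i%C * v.2 + m%:C%C * u.1, - 'i%C * v.1 - m%:C%C * u.2).

(* graph of the operator D^{Lambda_W}: (Phi, Psi) with Phi in its domain and
   D^{Lambda_W} Phi = Psi, as elements of H (i.e. up to a.e. equality) *)
Definition DLam (R : realType) (G : mgraph R) (K : finType) (lab : K -> edge G * vert G)
  (Lam : (K -> R[i]) -> (K -> R[i]) -> Prop) (m : R) (Phi Psi : state G) : Prop :=
  [/\ L2 Phi, L2 Psi &
   exists Phi0 Phi1 : state G,
     [/\ forall j, aeq (Ij G j) (Phi0 j) (Phi j),
         forall j, H1c (Ij G j) (Kj G j) (fun x => (Phi0 j x).1) (fun x => (Phi1 j x).1)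
                /\ H1c (Ij G j) (Kj G j) (fun x => (Phi0 j x).2) (fun x => (Phi1 j x).2),
         Lam (Wmap lab (Gam1 Phi0)) (Wmap lab (Gam2 Phi0)) &
         forall j, aeq (Ij G j) (Psi j) (fun x => Dmax m (Phi0 j x) (Phi1 j x))]].

Definition Pmap (R : realType) (G : mgraph R) (Jm : {set edge G}) (Phi : state G) : state G :=
  fun j x => if j \in Jm then ((Phi j (- x)).1, - (Phi j (- x)).2) else Phi j x.

Definition sqn (R : realType) (u : R[i] * R[i]) : R :=
  Re u.1 ^+ 2 + Im u.1 ^+ 2 + Re u.2 ^+ 2 + Im u.2 ^+ 2.
Definition norm2 (R : realType) (G : mgraph R) (Phi : state G) : \bar R :=
  (\sum_(j : edge G) \int[mu R]_(x in Ij G j) (sqn (Phi j x))%:E)%E.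

From mathcomp Require Import all_boot all_order all_algebra.
From mathcomp Require Import all_classical all_reals all_analysis.
Import Order.TTheory GRing.Theory Num.Theory.
From mathcomp Require Import complex.
From mathcomp Require Import lra measurable_realfun.
Local Open Scope ring_scope.
Local Open Scope classical_set_scope.

(** On an edge of J_-, P_{J_-} is Phi |-> sigma_3 Phi(- .). Lebesgue measure is
   invariant under x |-> -x, so this map preserves L^2 norms, null sets and the
   absolute continuity defining H^1, the derivative of sigma_3 Phi(- .) being
   (- Phi_1'(- .), Phi_2'(- .)). Since sigma_3 anticommutes with sigma_1, P
   intertwines the edgewise expressions -i sigma_1 d/dx + m sigma_3. Reversing an
   edge exchanges its endpoints, and the sign carried by the second component
   cancels the sign change in Gamma^2, so W Gamma^k Phi and
   W~ Gamma~^k (P Phi) coincide and the condition Lambda is the same on both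
   sides. As P is an involution, this gives the intertwining in both directions. *)

Section reflection.
Context {R : realType}.

Lemma measurable_preimage_oppr (A : set R) :
  measurable A -> measurable ((-%R) @^-1` A).
Proof. by move=> mA; rewrite -[X in measurable X]setTI; exact: oppr_measurable. Qed.

Lemma ae_oppr (P : R -> Prop) :
  {ae mu R, forall x, P x} -> {ae mu R, forall x, P (- x)}.
Proof.
move=> [A [mA A0 PA]]; exists ((-%R) @^-1` A); split.
- exact: measurable_preimage_oppr.
- by rewrite -A0; exact: lebesgue_measureN.
- by move=> x /= nPx; apply: PA.
Qed.

Lemma integral_oppr (D : set R) (f : R -> \bar R) :
  measurable D -> measurable_fun D f ->
  (\int[mu R]_(x in D) f x = \int[mu R]_(x in (-%R) @^-1` D) f (- x)%R)%E.
Proof.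
move=> mD mf.
have ge0_oppr (h : R -> \bar R) : measurable_fun D h -> (forall x, 0 <= h x)%E ->
    (\int[mu R]_(x in D) h x = \int[mu R]_(x in (-%R) @^-1` D) h (- x)%R)%E.
  move=> mh h0.
  have := @ge0_integral_pushforward _ _ (measurableTypeR R) (measurableTypeR R) R
    -%R (@oppr_measurable R setT) (@lebesgue_measure R) D h mD mh (fun x _ => h0 x).
  rewrite /mu => <-.
  by apply: eq_measure_integral => //= A mA _; exact/esym/lebesgue_measureN.
have mfp := measurable_funepos mf; have mfn := measurable_funeneg mf.
rewrite integralE [RHS]integralE (ge0_oppr _ mfp) ?(ge0_oppr _ mfn) // /mu.
by congr (_ - _)%E; apply: eq_integral => x _; rewrite ?funeposE ?funenegE.
Qed.

Lemma integral_EFinN (D : set R) (g : R -> R) (r : R) :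
  (\int[mu R]_(x in D) (g x)%:E = r%:E)%E ->
  (\int[mu R]_(x in D) (- g x)%:E = (- r)%:E)%E.
Proof.
move=> gr; rewrite (_ : (fun x => _) = (fun x => - (g x)%:E)%E) //.
rewrite integralN; first by rewrite gr.
rewrite integralE in gr.
move: gr; move: (integral _ _ (funepos _)) => a; move: (integral _ _ (funeneg _)) => b.
by case: a => [a||]; case: b => [b||].
Qed.

End reflection.

Section function_spaces.
Context {R : realType}.
Implicit Types (D I K : set R).

Lemma ReN (z : R[i]) : Re (- z) = - Re z. Proof. by case: z. Qed.
Lemma ImN (z : R[i]) : Im (- z) = - Im z. Proof. by case: z. Qed.

Lemma L2r_oppr {D} {f : R -> R} :
  measurable D -> L2r D f -> L2r ((-%R) @^-1` D) (fun x => f (- x)).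
Proof.
move=> mD [mf f2]; split.
  by apply: (measurable_comp mD) mf _ => //; move=> _ [x Dx <-].
rewrite -(@integral_oppr _ _ (fun x => (f x ^+ 2)%:E)) //.
exact/measurable_EFinP/measurable_funX.
Qed.

Lemma L2rN {D} {f : R -> R} : L2r D f -> L2r D (fun x => - f x).
Proof.
by move=> [mf f2]; split; [exact: measurable_funN | under eq_integral do rewrite sqrrN].
Qed.

Lemma L2c_oppr {D} {f : R -> R[i]} :
  measurable D -> L2c D f -> L2c ((-%R) @^-1` D) (fun x => f (- x)).
Proof. by move=> mD [fRe fIm]; split; [exact: L2r_oppr mD fRe | exact: L2r_oppr mD fIm]. Qed.

Lemma L2cN {D} {f : R -> R[i]} : L2c D f -> L2c D (fun x => - f x).
Proof.
move=> [fRe fIm]; split.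
- by rewrite (funext (fun x => ReN (f x))); exact: L2rN.
- by rewrite (funext (fun x => ImN (f x))); exact: L2rN.
Qed.

Lemma ACr_oppr {I K} {f g : R -> R} :
  measurable I -> (forall x y, K x -> K y -> `]x, y[ `<=` I) -> measurable_fun I g ->
  ACr K f g -> ACr ((-%R) @^-1` K) (fun x => f (- x)) (fun x => - g (- x)).
Proof.
move=> mI KI mg fg x y Kx Ky xy.
have mg' : measurable_fun `[- y, - x] g.
  apply: (@measurable_fun_itv_cc _ _ _ false true).
  exact: measurable_funS mI (KI _ _ Ky Kx) mg.
have -> : `[x, y] = (-%R) @^-1` `[- y, - x] :> set R.
  by rewrite opp_preimage_itvbndbnd !opprK.
rewrite -[f (- y) - _]opprB; apply: integral_EFinN.
rewrite -(fg _ _ Ky Kx) ?lerN2 // [RHS]integral_oppr ?set_mem_set //.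
exact/measurable_EFinP.
Qed.

Lemma ACrN {K} {f g : R -> R} : ACr K f g -> ACr K (fun x => - f x) (fun x => - g x).
Proof. by move=> fg x y Kx Ky xy; rewrite -opprD; exact/integral_EFinN/fg. Qed.

Lemma H1c_oppr {I K} {f g : R -> R[i]} :
  measurable I -> (forall x y, K x -> K y -> `]x, y[ `<=` I) -> H1c I K f g ->
  H1c ((-%R) @^-1` I) ((-%R) @^-1` K) (fun x => f (- x)) (fun x => - g (- x)).
Proof.
move=> mI KI [f2 g2 fgRe fgIm]; split.
- exact: L2c_oppr.
- exact/L2cN/L2c_oppr.
- rewrite (funext (fun x => ReN (g (- x)))).
  by apply: ACr_oppr mI KI _ fgRe; case: g2 => -[].
- rewrite (funext (fun x => ImN (g (- x)))).
  by apply: ACr_oppr mI KI _ fgIm; case: g2 => _ [].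
Qed.

Lemma H1cN {I K} {f g : R -> R[i]} :
  H1c I K f g -> H1c I K (fun x => - f x) (fun x => - g x).
Proof.
move=> [f2 g2 fgRe fgIm]; split; [exact: L2cN | exact: L2cN | |].
- by rewrite (funext (fun x => ReN (f x))) (funext (fun x => ReN (g x))); exact: ACrN.
- by rewrite (funext (fun x => ImN (f x))) (funext (fun x => ImN (g x))); exact: ACrN.
Qed.

Lemma aeq_imply {T U : Type} {D} {f g : R -> T} {f' g' : R -> U} :
  aeq D f g -> (forall x, D x -> f x = g x -> f' x = g' x) -> aeq D f' g'.
Proof.
by move=> + fg'; apply: negligibleS => x /= nfg' fg; apply/nfg' => Dx; exact/fg'/fg.
Qed.

Lemma aeq_trans {T : Type} {D} {f g h : R -> T} : aeq D f g -> aeq D g h -> aeq D f h.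
Proof.
move=> fg gh; apply: negligibleS (negligibleU fg gh) => x /= nfh.
by apply/not_andP; apply: contra_not nfh => -[fgx ghx] Dx; rewrite fgx ?ghx.
Qed.

Lemma aeq_refl {T : Type} D (f : R -> T) : aeq D f f.
Proof. by exists set0; split => // x /= nf; apply: nf. Qed.

Lemma aeq_oppr {T : Type} {D} {f g : R -> T} :
  aeq D f g -> aeq ((-%R) @^-1` D) (fun x => f (- x)) (fun x => g (- x)).
Proof. exact: ae_oppr. Qed.

End function_spaces.

Section mirror.
Context {R : realType}.
Implicit Types (b : bool) (A I K : set R) (phi dphi : R -> R[i] * R[i]).

Definition mirror_set b A : set R := if b then (-%R) @^-1` A else A.

Definition mirror b phi : R -> R[i] * R[i] :=
  fun x => if b then ((phi (- x)).1, - (phi (- x)).2) else phi x.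

Definition dmirror b dphi : R -> R[i] * R[i] :=
  fun x => if b then (- (dphi (- x)).1, (dphi (- x)).2) else dphi x.

Definition L2pair I phi := L2c I (fun x => (phi x).1) /\ L2c I (fun x => (phi x).2).

Definition H1pair I K phi dphi :=
  H1c I K (fun x => (phi x).1) (fun x => (dphi x).1) /\
  H1c I K (fun x => (phi x).2) (fun x => (dphi x).2).

Lemma mirror_setK b : involutive (mirror_set b).
Proof. by case: b => // A; apply/seteqP; split => x; rewrite /mirror_set /= opprK. Qed.

Lemma mirrorK b : involutive (mirror b).
Proof.
by case: b => // phi; apply/funext => x; rewrite /mirror /= !opprK; case: (phi x).
Qed.

Lemma L2pair_mirror b {I phi} :
  measurable I -> L2pair I phi -> L2pair (mirror_set b I) (mirror b phi).
Proof.
case: b => // mI [phi1 phi2]; rewrite /mirror_set /mirror /=.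
by split; [exact: L2c_oppr mI phi1 | exact: L2cN (L2c_oppr mI phi2)].
Qed.

Lemma aeq_mirror b {I phi psi} :
  aeq I phi psi -> aeq (mirror_set b I) (mirror b phi) (mirror b psi).
Proof.
by case: b => // /aeq_oppr/aeq_imply; apply=> x _; rewrite /mirror => ->.
Qed.

Lemma H1pair_mirror b {I K phi dphi} :
  measurable I -> (forall x y, K x -> K y -> `]x, y[ `<=` I) -> H1pair I K phi dphi ->
  H1pair (mirror_set b I) (mirror_set b K) (mirror b phi) (dmirror b dphi).
Proof.
case: b => // mI KI [phi1 phi2]; rewrite /mirror_set /mirror /dmirror /=.
split; first exact: H1c_oppr mI KI phi1.
have := H1cN (H1c_oppr mI KI phi2).
by congr H1c; apply/funext => x; rewrite opprK.
Qed.

Lemma mirror_Dmax (m : R) b phi dphi x :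
  mirror b (fun y => Dmax m (phi y) (dphi y)) x =
  Dmax m (mirror b phi x) (dmirror b dphi x).
Proof.
case: b => //; rewrite /mirror /dmirror /Dmax /=.
by congr (_, _); rewrite !mulrN opprD !opprK.
Qed.

Lemma integral_sqn_mirror b {I phi} : measurable I -> L2pair I phi ->
  (\int[mu R]_(x in mirror_set b I) (sqn (mirror b phi x))%:E =
   \int[mu R]_(x in I) (sqn (phi x))%:E)%E.
Proof.
case: b => // mI [[[m1 _] [m2 _]] [[m3 _] [m4 _]]].
rewrite [RHS]integral_oppr //; last first.
  apply/measurable_EFinP; rewrite /sqn.
  by repeat apply: measurable_funD; exact: measurable_funX.
by apply: eq_integral => x _; rewrite /sqn /= ReN ImN !sqrrN.
Qed.

End mirror.

Section graph.
Context {R : realType} (G : mgraph R).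

Lemma measurable_Ij j : measurable (Ij G j).
Proof. by case: j => [i|e]; rewrite /Ij ?set_mem_set //; case: (einit G e). Qed.

Lemma Kj_itv_sub_Ij j x y : Kj G j x -> Kj G j y -> `]x, y[ `<=` Ij G j.
Proof.
case: j => [i|e]; rewrite /Kj /Ij ?set_mem_set /=.
  move=> /= hx hy t; rewrite /= !in_itv /=; move: hx hy; rewrite /= !in_itv /=.
  by move=> /andP[? ?] /andP[? ?] /andP[? ?]; lra.
case: (einit G e) => /=; rewrite ?set_mem_set /= => hx hy t;
  rewrite /= !in_itv /= ?andbT; move: hx hy; rewrite /= !in_itv /= ?andbT;
  by move=> ? ? /andP[? ?]; lra.
Qed.

Lemma DLam_aeq (K : finType) (lab : K -> edge G * vert G) Lam (m : R)
    (X Y Y' : state G) :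
  L2 Y' -> (forall j, aeq (Ij G j) (Y' j) (Y j)) ->
  DLam lab Lam m X Y -> DLam lab Lam m X Y'.
Proof.
move=> L2Y' Y'Y [L2X _ [X0 [X1 [X0X H1X Lam0 YD]]]]; split => //.
by exists X0, X1; split => // j; exact: aeq_trans (Y'Y j) (YD j).
Qed.

End graph.

Section reversal.
Context {R : realType} {G : mgraph R} (Jm : {set edge G}).
Local Notation Gt := (revG Jm).

Lemma Ij_revG j : Ij Gt j = mirror_set (j \in Jm) (Ij G j).
Proof.
case: j => [i|e]; rewrite /Ij /mirror_set /=.
  case: ifP => // _; apply/seteqP; split => x;
  by rewrite /= ?set_mem_set !in_setE /= !in_itv /= => /andP[? ?]; apply/andP; split; lra.
case: (inr e \in Jm) => //; case: (einit G e); apply/seteqP; split => x;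
  by rewrite /= ?set_mem_set !in_setE /= !in_itv /= ?andbT => ?; lra.
Qed.

Lemma Kj_revG j : Kj Gt j = mirror_set (j \in Jm) (Kj G j).
Proof.
case: j => [i|e]; rewrite /Kj /mirror_set /=.
  case: ifP => // _; apply/seteqP; split => x;
  by rewrite /= ?set_mem_set !in_setE /= !in_itv /= => /andP[? ?]; apply/andP; split; lra.
case: (inr e \in Jm) => //; case: (einit G e); apply/seteqP; split => x;
  by rewrite /= ?set_mem_set !in_setE /= !in_itv /= ?andbT => ?; lra.
Qed.

Lemma mirror_Ij_revG j : mirror_set (j \in Jm) (Ij Gt j) = Ij G j.
Proof. by rewrite Ij_revG mirror_setK. Qed.

Lemma mirror_Kj_revG j : mirror_set (j \in Jm) (Kj Gt j) = Kj G j.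
Proof. by rewrite Kj_revG mirror_setK. Qed.

Lemma PmapE X j : Pmap Jm X j = mirror (j \in Jm) (X j).
Proof. by []. Qed.

Lemma PmapK : involutive (Pmap Jm).
Proof. by move=> X; apply/funext => j; exact: mirrorK. Qed.

Lemma L2_revG X : L2 X -> L2 (G := Gt) (Pmap Jm X).
Proof.
by move=> L2X j; rewrite Ij_revG; exact: L2pair_mirror (measurable_Ij G j) (L2X j).
Qed.

Lemma L2_unrevG X : L2 (G := Gt) X -> L2 (Pmap Jm X).
Proof.
by move=> L2X j; rewrite -mirror_Ij_revG; exact: L2pair_mirror (measurable_Ij Gt j) (L2X j).
Qed.

Lemma norm2_revG X : L2 X -> norm2 (G := Gt) (Pmap Jm X) = norm2 X.
Proof.
move=> L2X; apply: eq_bigr => j _; rewrite Ij_revG.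
exact: integral_sqn_mirror (measurable_Ij G j) (L2X j).
Qed.

Hypothesis G_loopless : forall i, src G i != tgt G i.

Lemma Gam1_revG X j v : inc (G := G) j v ->
  Gam1 (G := Gt) (Pmap Jm X) (end_at (G := Gt) j v) = Gam1 X (end_at j v).
Proof.
have srcNtgt i : (src G i == tgt G i) = false by exact/negbTE/G_loopless.
case: j => [i|e] /= jv; rewrite /end_at /=; case jJ: (_ \in Jm) => /=;
  rewrite /Gam1 /Pmap /= jJ // opprK //.
by case/orP: jv => /eqP ->; rewrite ?eqxx ?srcNtgt 1?eq_sym ?srcNtgt /= ?opprK.
Qed.

Lemma Gam2_revG X j v : inc (G := G) j v ->
  Gam2 (G := Gt) (Pmap Jm X) (end_at (G := Gt) j v) = Gam2 X (end_at j v).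
Proof.
have srcNtgt i : (src G i == tgt G i) = false by exact/negbTE/G_loopless.
case: j => [i|e] /= jv; rewrite /end_at /=; case jJ: (_ \in Jm) => /=;
  rewrite /Gam2 /rho /Pmap /= jJ //.
  case/orP: jv => /eqP ->; rewrite ?eqxx ?srcNtgt 1?eq_sym ?srcNtgt /= opprK;
  by rewrite ?mulrNN ?mulrN ?mulNr.
by rewrite opprK; case: (einit G e); rewrite /= ?mulrN ?mulNr ?mulr1 ?mulrN1 ?opprK.
Qed.

Local Notation lab := (fun k : Fidx G => val k).

Lemma Wmap_Gam_revG X :
  Wmap (G := Gt) lab (Gam1 (G := Gt) (Pmap Jm X)) = Wmap lab (Gam1 X) /\
  Wmap (G := Gt) lab (Gam2 (G := Gt) (Pmap Jm X)) = Wmap lab (Gam2 X).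
Proof.
by split; apply/funext => -[[j v] jv]; [exact: Gam1_revG | exact: Gam2_revG].
Qed.

Variables (Lam : (Fidx G -> R[i]) -> (Fidx G -> R[i]) -> Prop) (m : R).

Lemma DLam_revG X Y :
  DLam lab Lam m X Y -> DLam (G := Gt) lab Lam m (Pmap Jm X) (Pmap Jm Y).
Proof.
case=> L2X L2Y [X0 [X1 [X0X H1X Lam0 YD]]]; split; [exact: L2_revG | exact: L2_revG |].
exists (Pmap Jm X0), (fun j => dmirror (j \in Jm) (X1 j)); split => [j|j||j].
- by rewrite Ij_revG; exact: aeq_mirror.
- rewrite Ij_revG Kj_revG.
  exact: H1pair_mirror (measurable_Ij G j) (@Kj_itv_sub_Ij _ G j) (H1X j).
- by case: (Wmap_Gam_revG X0) => -> ->.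
- rewrite Ij_revG !PmapE.
  by apply: (aeq_imply (aeq_mirror (j \in Jm) (YD j))) => x _ ->; exact: mirror_Dmax.
Qed.

Lemma DLam_unrevG X Y :
  DLam (G := Gt) lab Lam m X Y -> DLam lab Lam m (Pmap Jm X) (Pmap Jm Y).
Proof.
case=> L2X L2Y [X0 [X1 [X0X H1X Lam0 YD]]]; split; [exact: L2_unrevG | exact: L2_unrevG |].
exists (Pmap Jm X0), (fun j => dmirror (j \in Jm) (X1 j)); split => [j|j||j].
- by rewrite -mirror_Ij_revG; exact: aeq_mirror.
- rewrite -mirror_Ij_revG -mirror_Kj_revG.
  exact: H1pair_mirror (measurable_Ij Gt j) (@Kj_itv_sub_Ij _ Gt j) (H1X j).
- by case: (Wmap_Gam_revG (Pmap Jm X0)) Lam0 => <- <-; rewrite PmapK.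
- rewrite -mirror_Ij_revG !PmapE.
  by apply: (aeq_imply (aeq_mirror (j \in Jm) (YD j))) => x _ ->; exact: mirror_Dmax.
Qed.

End reversal.

Theorem theorem4p6 (R : realType) (G : mgraph R) (Jm : {set edge G})
  (Lam : (Fidx G -> R[i]) -> (Fidx G -> R[i]) -> Prop) (m : R) :
  wf G -> 0 <= m -> lin_rel Lam ->
  let Gt := revG Jm in
  (* tilde D^{Lambda_{tilde W}} P = P D^{Lambda_W} (equality of operators in H) *)
  (forall Phi Psi : state G, L2 (G := Gt) Psi ->
     DLam (G := Gt) (fun k : Fidx G => val k) Lam m (Pmap Jm Phi) Psi <->
     exists Psi' : state G,
       DLam (G := G) (fun k : Fidx G => val k) Lam m Phi Psi' /\
       forall j, aeq (Ij Gt j) (Psi j) (Pmap Jm Psi' j)) /\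
  (* in particular: P is unitary H -> tilde H, hence the two operators are
     unitarily equivalent *)
  (forall Phi : state G, L2 Phi ->
     L2 (G := Gt) (Pmap Jm Phi) /\ norm2 (G := Gt) (Pmap Jm Phi) = norm2 Phi) /\
  (forall Phit : state G, L2 (G := Gt) Phit ->
     exists Phi : state G, L2 Phi /\ forall j, aeq (Ij Gt j) (Pmap Jm Phi j) (Phit j)).
Proof.
move=> [_ G_loopless _ _] _ _ Gt; split; [|split].
- move=> Phi Psi L2Psi; split.
  + move/(DLam_unrevG Jm G_loopless); rewrite PmapK => DPhi.
    exists (Pmap Jm Psi); split => // j.
    by rewrite PmapK; exact: aeq_refl.
  + case=> Psi' [/(DLam_revG Jm G_loopless) DPsi' PsiPsi'].
    exact: DLam_aeq L2Psi PsiPsi' DPsi'.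
- by move=> Phi L2Phi; split; [exact: L2_revG | exact: norm2_revG].
- move=> Phit L2Phit; exists (Pmap Jm Phit); split; first exact: L2_unrevG.
  by move=> j; rewrite PmapK; exact: aeq_refl.
Qed.
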